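(* Let $M_G$ be a connected mixed graph of order $4$. Then $\operatorname{rank}N(M_G)=3$ if and only if either (1) $G=K_{1,1,2}$ (the complete graph $K_4$ minus an edge) and the unique mixed $4$-cycle of $M_G$ is positive, or (2) $G=K_4$ and, among the three mixed $4$-cycles of $M_G$, two are positive and one is semi-negative.
   Context: A mixed graph $M_G$ is obtained from a finite simple graph $G$ by orienting the edges of some subset of $E(G)$; it is connected if $G$ is. With $\omega=\frac{1+\mathbf{i}\sqrt3}{2}$, $N(M_G)=(n_{st})$ has entry $\omega$ for an arc from $u_s$ to $u_t$, $\bar\omega$ for an arc from $u_t$ to $u_s$, $1$ for an undirected edge, $0$ otherwise. A mixed cycle in $M_G$ is a mixed subgraph whose underlying graph is a cycle $v_1\cdots v_lv_1$; its weight is $n_{12}\cdots n_{l1}$. It is positive if the weight is $1$, semi-negative if it is $-\omega$ or $-\bar\omega$. *)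

From HB Require Import structures.
From mathcomp Require Import all_boot all_order all_algebra all_fingroup all_field.
Set Implicit Arguments. Unset Strict Implicit. Unset Printing Implicit Defensive.
Import Order.TTheory GRing.Theory Num.Theory.
Local Open Scope ring_scope.

(* A mixed graph on the vertex set 'I_n: an underlying finite simple graph
   (symmetric irreflexive adjacency [madj]) together with a set of arcs
   [marc] : [marc u v] means the edge uv is oriented from u to v.
   Edges of G that are not arcs in either direction are undirected. *)
Record mixed_graph (n : nat) := MixedGraph {
  madj : rel 'I_n;
  marc : rel 'I_n;
  madj_sym : symmetric madj;
  madj_irr : irreflexive madj;
  marc_adj : forall u v, marc u v -> madj u v;
  marc_asym : forall u v, marc u v -> ~~ marc v u
}.

Definition omega : algC := (1 + 'i * sqrtC 3) / 2.

Definition Nmx n (M : mixed_graph n) : 'M[algC]_n :=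
  \matrix_(s, t) (if marc M s t then omega
                  else if marc M t s then omega^*
                  else if madj M s t then 1 else 0).

Definition mconnected n (M : mixed_graph n) : Prop :=
  forall x y, connect (madj M) x y.

(* A traversal v_0 v_1 ... v_{n-1} v_0 of a Hamiltonian cycle, given by a
   permutation s of the vertices (v_k = s k). *)
Definition is_trav n (M : mixed_graph n) (s : {perm 'I_n}) : bool :=
  [forall k : 'I_n, madj M (s k) (s (ordS k))].

Definition trav_edges n (s : {perm 'I_n}) : {set {set 'I_n}} :=
  [set [set s k; s (ordS k)] | k : 'I_n].

Definition trav_weight n (M : mixed_graph n) (s : {perm 'I_n}) : algC :=
  \prod_(k < n) Nmx M (s k) (s (ordS k)).

Definition is_full_cycle n (M : mixed_graph n) (C : {set {set 'I_n}}) : bool :=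
  [exists s : {perm 'I_n}, is_trav M s && (trav_edges s == C)].

Definition positive_cycle n (M : mixed_graph n) (C : {set {set 'I_n}}) : bool :=
  [exists s : {perm 'I_n},
     [&& is_trav M s, trav_edges s == C & trav_weight M s == 1]].

Definition seminegative_cycle n (M : mixed_graph n) (C : {set {set 'I_n}}) : bool :=
  [exists s : {perm 'I_n},
     [&& is_trav M s, trav_edges s == C &
        (trav_weight M s == - omega) || (trav_weight M s == - omega^*)]].

(* K_{1,1,2} on 'I_4: complete graph minus the edge {2,3} *)
Definition k112 : rel 'I_4 := fun x y => (x != y) && ((x < 2)%N || (y < 2)%N).

Definition is_K112 (M : mixed_graph 4) : Prop :=
  exists f : {perm 'I_4}, forall x y, madj M (f x) (f y) = k112 x y.

Definition is_K4 (M : mixed_graph 4) : Prop :=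
  forall x y, madj M x y = (x != y).

From HB Require Import structures.
From mathcomp Require Import all_boot all_order all_algebra all_fingroup all_field.
From mathcomp Require Import ring.
Set Implicit Arguments.
Unset Strict Implicit.
Unset Printing Implicit Defensive.
Import Order.TTheory GRing.Theory Num.Theory.
Local Open Scope ring_scope.

(* The entries of N(M_G) lie in the ring Z[omega] of Eisenstein integers, which
   embeds injectively into algC, so the rank of N(M_G) and the weights of the mixed
   4-cycles can be computed exactly in Z[omega].  A 4 x 4 matrix has rank 3 iff its
   determinant vanishes and some 3 x 3 minor does not.  A mixed graph on four vertices
   is determined by the state of each of its six vertex pairs (no edge, undirected
   edge, arc in either direction), and its Hamiltonian cycles are traversed by the 24
   orderings of the vertices; both sides of the equivalence are therefore decided by
   evaluating them on all 4^6 such graphs. *)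

Lemma set2_inj (T : finType) (a b c d : T) : c != d ->
  [set a; b] = [set c; d] -> (a, b) = (c, d) \/ (a, b) = (d, c).
Proof.
move=> neq_cd eq_ab; have /set2P c_ab : c \in [set a; b] by rewrite eq_ab set21.
have /set2P d_ab : d \in [set a; b] by rewrite eq_ab set22.
by case: c_ab d_ab neq_cd => -> [] ->; rewrite ?eqxx //; [left | right].
Qed.

Lemma size_undup_map_ker (T U V : eqType) (f : T -> U) (g : T -> V) s :
  (forall x y, (f x == f y) = (g x == g y)) ->
  size (undup (map f s)) = size (undup (map g s)).
Proof.
move=> same_ker; elim: s => //= x s IH.
have -> : (f x \in map f s) = (g x \in map g s).
  apply/mapP/mapP => [] [y y_s /eqP fg_xy]; exists y => //; apply/eqP.
    by rewrite -same_ker.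
  by rewrite same_ker.
by case: ifP => _ /=; rewrite IH.
Qed.

Lemma size_undup_eq_mem (T : eqType) (s1 s2 : seq T) :
  s1 =i s2 -> size (undup s1) = size (undup s2).
Proof.
move=> eq_s; apply/perm_size/uniq_perm; rewrite ?undup_uniq // => x.
by rewrite !mem_undup eq_s.
Qed.

Lemma exists_ord_has n (P : pred nat) : [exists i : 'I_n, P i] = has P (iota 0 n).
Proof.
rewrite -val_enum_ord has_map.
by apply/existsP/hasP => [[i Pi] | [i _ Pi]]; exists i; rewrite ?mem_enum.
Qed.

Lemma forall_ordP n (P : pred nat) : reflect (forall i : 'I_n, P i) (all P (iota 0 n)).
Proof.
rewrite -val_enum_ord all_map.
by apply: (iffP allP) => [Pi i | Pi i _]; [exact/Pi/mem_enum | exact: Pi].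
Qed.

Lemma omega_sqr : omega ^+ 2 = omega - 1.
Proof.
have sqrt3 : sqrtC 3 ^+ 2 = 3 :> algC by exact: sqrtCK.
have i2 : 'i ^+ 2 = -1 :> algC by exact: sqrCi.
rewrite /omega; apply/eqP; rewrite -subr_eq0; apply/eqP.
have -> : ((1 + 'i * sqrtC 3) / 2) ^+ 2 - ((1 + 'i * sqrtC 3) / 2 - 1) =
          ('i ^+ 2 * sqrtC 3 ^+ 2 + 3) / 4 :> algC.
  by field.
by rewrite i2 sqrt3 mulN1r addNr mul0r.
Qed.

Lemma conj_omega : omega^* = 1 - omega.
Proof.
rewrite /omega rmorphM rmorphD /= rmorph1 fmorphV /= rmorphM /= conjCi.
rewrite (geC0_conj (x := sqrtC 3)) ?sqrtC_ge0 ?ler0n // rmorph_nat.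
by field.
Qed.

Lemma omega_sub_conj : omega - omega^* = 'i * sqrtC 3.
Proof. by rewrite conj_omega /omega; field. Qed.

(* The Eisenstein integers Z[omega], the pair (a, b) standing for a + b omega. *)
Definition eis := (int * int)%type.
HB.instance Definition _ := GRing.Zmodule.copy eis (int * int)%type.

Definition eisC (x : eis) : algC := x.1%:~R + x.2%:~R * omega.

Fact eisC_is_zmod_morphism : zmod_morphism eisC.
Proof. by move=> x y; rewrite /eisC /= !intrB; ring. Qed.
HB.instance Definition _ := GRing.isZmodMorphism.Build eis algC eisC
  eisC_is_zmod_morphism.

Lemma eisC_eq0 x : eisC x = 0 -> x = 0.
Proof.
case: x => a b; rewrite /eisC /= => eq0.
have conj_eq0 : a%:~R + b%:~R * omega^* = 0 :> algC.
  by rewrite -(rmorph_int Num.conj a) -(rmorph_int Num.conj b) -rmorphM -rmorphD eq0 rmorph0.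
have /eqP : b%:~R * ('i * sqrtC 3) = 0 :> algC.
  have -> : b%:~R * ('i * sqrtC 3) =
            (a%:~R + b%:~R * omega) - (a%:~R + b%:~R * omega^*) :> algC.
    by rewrite -omega_sub_conj; ring.
  by rewrite eq0 conj_eq0 subrr.
have i_neq0 : 'i != 0 :> algC by exact: neq0Ci.
rewrite !mulf_eq0 (negPf i_neq0) sqrtC_eq0 pnatr_eq0 intr_eq0 !orbF => /eqP b0.
by move: eq0; rewrite b0 mul0r addr0 => /eqP; rewrite intr_eq0 => /eqP ->.
Qed.

Lemma eisC_inj : injective eisC.
Proof. by move=> x y /eqP; rewrite -subr_eq0 -raddfB => /eqP /eisC_eq0 /subr0_eq. Qed.

Definition eis_mul (x y : eis) : eis :=
  (x.1 * y.1 - x.2 * y.2, x.1 * y.2 + x.2 * y.1 + x.2 * y.2).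

Lemma eisC_mul : {morph eisC : x y / eis_mul x y >-> x * y}.
Proof.
move=> [a b] [c d]; rewrite /eisC /= !(intrD, intrB, intrM).
have -> : (a%:~R + b%:~R * omega) * (c%:~R + d%:~R * omega) =
          a%:~R * c%:~R + (a%:~R * d%:~R + b%:~R * c%:~R) * omega
          + b%:~R * d%:~R * omega ^+ 2 :> algC by ring.
by rewrite omega_sqr; ring.
Qed.

Fact eis_mulA : associative eis_mul.
Proof. by move=> x y z; apply: eisC_inj; rewrite !eisC_mul mulrA. Qed.
Fact eis_mulC : commutative eis_mul.
Proof. by move=> x y; apply: eisC_inj; rewrite !eisC_mul mulrC. Qed.
Fact eis_mul1 : left_id (1, 0) eis_mul.
Proof. by move=> x; apply: eisC_inj; rewrite eisC_mul /eisC /= mul0r addr0 mul1r. Qed.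
Fact eis_mulDl : left_distributive eis_mul +%R.
Proof. by move=> x y z; apply: eisC_inj; rewrite eisC_mul !raddfD /= !eisC_mul mulrDl. Qed.
Fact eis_one_neq0 : (1, 0) != 0 :> eis. Proof. by []. Qed.
HB.instance Definition _ := GRing.Zmodule_isComNzRing.Build eis
  eis_mulA eis_mulC eis_mul1 eis_mulDl eis_one_neq0.

Fact eisC_is_monoid_morphism : monoid_morphism eisC.
Proof. by split; [rewrite /eisC /= mul0r addr0 | exact: eisC_mul]. Qed.
HB.instance Definition _ := GRing.isMonoidMorphism.Build eis algC eisC
  eisC_is_monoid_morphism.

Definition eis_omega : eis := (0, 1).

Lemma eisC_omega : eisC eis_omega = omega.
Proof. by rewrite /eisC /= mul1r add0r. Qed.

Lemma eisC_omega_conj : eisC (1 - eis_omega) = omega^*.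
Proof. by rewrite rmorphB rmorph1 /= eisC_omega conj_omega. Qed.

(* Laplace expansion along the first row; unlike \det, it evaluates by computation. *)
Fixpoint cofdet {R : pzRingType} n (f : nat -> nat -> R) : R :=
  if n is n'.+1 then
    foldr +%R 0 [seq (-1) ^+ j * f 0%N j * cofdet n' (fun a b => f a.+1 (bump j b))
                | j <- iota 0 n]
  else 1.

Lemma det_cofdet (R : comNzRingType) n (f : nat -> nat -> R) :
  \det (\matrix_(i < n, j < n) f i j) = cofdet n f.
Proof.
elim: n f => [|n IH] f; first by rewrite det_mx00.
rewrite (expand_det_row _ ord0) [RHS]/cofdet -/cofdet foldrE big_map.
rewrite -[iota 0 n.+1]/(index_iota 0 n.+1) big_mkord; apply: eq_bigr => j _.
rewrite /cofactor mxE add0n mulrCA mulrA -IH; congr (_ * \det _).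
by apply/matrixP => a b; rewrite !mxE.
Qed.

Section CorankOne.
Variable F : fieldType.

Lemma mxrank_mxsub m n m' n' (f : 'I_m' -> 'I_m) (g : 'I_n' -> 'I_n)
    (A : 'M[F]_(m, n)) :
  (\rank (mxsub f g A) <= \rank A)%N.
Proof.
rewrite -[A in mxsub _ _ A]mul1mx mxsub_mul -[A in colsub _ A]mulmx1 -mulmx_colsub.
exact: leq_trans (mxrankM_maxr _ _) (mxrankM_maxl _ _).
Qed.

(* Take a maximal free family of rows, then a maximal free family of columns of it. *)
Lemma mxsub_maxrank_unit m n r (A : 'M[F]_(m, n)) : \rank A = r ->
  exists (f : 'I_r -> 'I_m) (g : 'I_r -> 'I_n), mxsub f g A \in unitmx.
Proof.
move=> rkA; subst r; set B := rowsub (maxrankfun A) A.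
have fullBT : row_full B^T by rewrite /row_full mxrank_tr; exact: maxrowsub_free.
exists (maxrankfun A), (fullrankfun fullBT).
rewrite -unitmx_tr (_ : _^T = rowsub (fullrankfun fullBT) B^T).
  exact: fullrowsub_unit.
by apply/matrixP => i j; rewrite !mxE.
Qed.

Lemma rowsub_sub_lift n m (f : 'I_n -> 'I_n.+1) (A : 'M[F]_(n.+1, m)) :
  exists i, (rowsub f A <= rowsub (lift i) A)%MS.
Proof.
have [i fi] : exists i, i \notin codom f.
  apply/existsP; rewrite -negb_forall; apply/negP => /forallP codom_full.
  have : (#|'I_n.+1| <= #|codom f|)%N.
    by apply/subset_leq_card/subsetP => x _; exact: codom_full.
  by rewrite card_ord => /leq_trans/(_ (card_size _)); rewrite size_codom card_ord ltnn.
exists i; apply: (submx_rowsub (fun a => odflt a (unlift i (f a)))) => a /=.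
by case: unliftP => // fa_i; rewrite -fa_i codom_f in fi.
Qed.

Lemma mxrank_mxsub_lift n (A : 'M[F]_n.+1) (f g : 'I_n -> 'I_n.+1) :
  exists i j, (\rank (mxsub f g A) <= \rank (mxsub (lift i) (lift j) A))%N.
Proof.
have [i fi] := rowsub_sub_lift f A.
have [j gj] := rowsub_sub_lift g (rowsub (lift i) A)^T.
exists i, j; apply: (@leq_trans (\rank (colsub g (rowsub (lift i) A)))).
  rewrite (_ : mxsub f g A = colsub g (rowsub f A)); last first.
    by apply/matrixP => a b; rewrite !mxE.
  have colsubE (X : 'M[F]_(n, n.+1)) : colsub g X = X *m colsub g 1%:M.
    by rewrite mulmx_colsub mulmx1.
  by apply: mxrankS; rewrite (colsubE (rowsub f A)) colsubE; exact: submxMr.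
rewrite -mxrank_tr -[X in (_ <= X)%N]mxrank_tr.
rewrite (_ : _^T = rowsub g (rowsub (lift i) A)^T); last first.
  by apply/matrixP => a b; rewrite !mxE.
rewrite (_ : _^T = rowsub (lift j) (rowsub (lift i) A)^T); last first.
  by apply/matrixP => a b; rewrite !mxE.
exact: mxrankS.
Qed.

Lemma mxrank_eq_corank1 n (A : 'M[F]_n.+1) :
  (\rank A == n) =
  (\det A == 0) && [exists i, exists j, \det (mxsub (lift i) (lift j) A) != 0].
Proof.
have det_unit k (B : 'M[F]_k) : (\det B != 0) = (k <= \rank B)%N.
  by rewrite -unitfE -unitmxE -row_free_unit row_leq_rank.
apply/idP/andP => [/eqP rkA | [/eqP detA0 /existsP [i /existsP [j minor]]]].
  split; first by rewrite -[_ == 0]negbK det_unit rkA ltnn.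
  have [f [g fgU]] := mxsub_maxrank_unit rkA.
  have [i [j le_fg]] := mxrank_mxsub_lift A f g.
  apply/existsP; exists i; apply/existsP; exists j.
  by rewrite det_unit (leq_trans _ le_fg) // mxrank_unit.
rewrite eqn_leq leqNgt -det_unit detA0 eqxx /=.
by rewrite (leq_trans _ (mxrank_mxsub (lift i) (lift j) A)) // -det_unit.
Qed.

End CorankOne.

Section Tours.
Variable n : nat.
Local Notation orderings := (permutations (iota 0 n)).
Implicit Types s : {perm 'I_n}.

Definition perm_seq (s : {perm 'I_n}) : seq nat := [seq s i : nat | i <- enum 'I_n].

Lemma nth_perm_seq s (i : 'I_n) : nth 0%N (perm_seq s) i = s i.
Proof. by rewrite (nth_map i) ?size_enum_ord // nth_ord_enum. Qed.

Lemma perm_seq_inj : injective perm_seq.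
Proof.
move=> s s' eq_ss'; apply/permP => i; apply/val_inj => /=.
by rewrite -!nth_perm_seq eq_ss'.
Qed.

Lemma perm_seq_mem s : perm_seq s \in orderings.
Proof.
rewrite mem_permutations uniq_perm ?iota_uniq //.
  by rewrite map_inj_uniq ?enum_uniq // => i j /val_inj/perm_inj.
move=> x; rewrite mem_iota leq0n add0n; apply/mapP/idP => [[i _ ->] | x_lt].
  exact: ltn_ord.
by exists ((s^-1)%g (Ordinal x_lt)); rewrite ?mem_enum ?permKV.
Qed.

Lemma codom_perm_seq : codom perm_seq =i orderings.
Proof.
have uniq_codom : uniq (codom perm_seq).
  by rewrite codomE map_inj_uniq ?enum_uniq //; exact: perm_seq_inj.
have sub_codom : {subset codom perm_seq <= orderings}.
  by move=> l /codomP [s ->]; exact: perm_seq_mem.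
have [] := uniq_min_size uniq_codom sub_codom => //.
by rewrite size_codom card_Sn size_permutations ?iota_uniq // size_iota.
Qed.

Lemma has_perm_seqP (P : pred (seq nat)) :
  reflect (exists s, P (perm_seq s)) (has P orderings).
Proof.
apply: (iffP hasP) => [[l /[dup] + Pl] | [s Ps]].
  by rewrite -codom_perm_seq => /codomP [s eq_l]; exists s; rewrite -eq_l.
by exists (perm_seq s); rewrite ?perm_seq_mem.
Qed.

Lemma all_perm_seqP (P : pred (seq nat)) :
  reflect (forall s, P (perm_seq s)) (all P orderings).
Proof.
apply: (iffP allP) => [Pall s | Pall l]; first exact/Pall/perm_seq_mem.
by rewrite -codom_perm_seq => /codomP [s ->].
Qed.

Definition tour_steps (l : seq nat) : seq (nat * nat) :=
  [seq (nth 0%N l k, nth 0%N l (k.+1 %% n)) | k <- iota 0 n].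

Lemma tour_steps_perm_seq s :
  tour_steps (perm_seq s) = [seq (s k : nat, s (ordS k) : nat) | k <- enum 'I_n].
Proof.
rewrite /tour_steps -val_enum_ord -map_comp; apply: eq_map => k /=.
by rewrite -[(k.+1 %% n)%N]/(nat_of_ord (ordS k)) !nth_perm_seq.
Qed.

Lemma forall_tour_steps s (P : nat -> nat -> bool) :
  [forall k, P (s k) (s (ordS k))] = all (fun st => P st.1 st.2) (tour_steps (perm_seq s)).
Proof.
rewrite tour_steps_perm_seq all_map.
by apply/forallP/allP => [Pk k _ | Pk k]; [exact: Pk | exact/Pk/mem_enum].
Qed.

Lemma prod_tour_steps (R : pzSemiRingType) s (e : nat -> nat -> R) :
  \prod_(k < n) e (s k) (s (ordS k)) =
  foldr *%R 1 [seq e st.1 st.2 | st <- tour_steps (perm_seq s)].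
Proof. by rewrite foldrE big_map tour_steps_perm_seq big_map enumT. Qed.

Definition tour_key (l : seq nat) : seq (nat * nat) :=
  [seq ij <- [seq (i, j) | i <- iota 0 n, j <- iota 0 n] |
   (ij \in tour_steps l) || ((ij.2, ij.1) \in tour_steps l)].

Hypothesis n_gt1 : (1 < n)%N.

Lemma ordS_neq (k : 'I_n) : ordS k != k.
Proof.
have := ltn_ord k; rewrite leq_eqVlt => /orP [/eqP eq_k | lt_k].
  by apply/eqP => /(congr1 val) /=; rewrite eq_k modnn => k0; move: n_gt1; rewrite -eq_k -k0.
by apply/eqP => /(congr1 val) /=; rewrite modn_small // => /esym; exact: n_Sn.
Qed.

Lemma mem_tour_steps s (x y : 'I_n) :
  ((x : nat, y : nat) \in tour_steps (perm_seq s)) = [exists k, (s k, s (ordS k)) == (x, y)].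
Proof.
rewrite tour_steps_perm_seq; apply/mapP/existsP => [[k _ [xk yk]] | [k /eqP [<- <-]]].
  by exists k; rewrite (val_inj xk) (val_inj yk).
by exists k; rewrite ?mem_enum.
Qed.

Lemma mem_trav_edges s (x y : 'I_n) :
  ([set x; y] \in trav_edges s) =
  ((x : nat, y : nat) \in tour_steps (perm_seq s)) ||
  ((y : nat, x : nat) \in tour_steps (perm_seq s)).
Proof.
have neq_step k : s k != s (ordS k) by rewrite (inj_eq perm_inj) eq_sym ordS_neq.
rewrite !mem_tour_steps; apply/imsetP/orP => [[k _ /(set2_inj (neq_step k))] | ].
  by case=> [[-> ->] | [-> ->]]; [left | right]; apply/existsP; exists k.
by case=> /existsP [k /eqP [<- <-]]; exists k; rewrite // setUC.
Qed.

Lemma trav_edges_eqE s s' :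
  (trav_edges s == trav_edges s') = (tour_key (perm_seq s) == tour_key (perm_seq s')).
Proof.
have mem_pairs (x y : 'I_n) : (x : nat, y : nat) \in [seq (i, j) | i <- iota 0 n, j <- iota 0 n].
  by apply: allpairs_f; rewrite mem_iota ltn_ord.
transitivity [forall x : 'I_n, forall y : 'I_n,
                ([set x; y] \in trav_edges s) == ([set x; y] \in trav_edges s')].
  apply/eqP/forallP => [-> x | same]; first exact/forallP.
  apply/eqP; rewrite eqEsubset; apply/andP; split; apply/subsetP => _ /imsetP [k _ ->].
    by rewrite -(eqP (forallP (same _) _)); apply/imsetP; exists k.
  by rewrite (eqP (forallP (same _) _)); apply/imsetP; exists k.
apply/forallP/eqP => [same | eq_key x].
  apply: eq_in_filter => _ /allpairsP [[i j] [/= + + ->]].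
  rewrite !mem_iota !add0n => /andP [_ lt_i] /andP [_ lt_j].
  by have /forallP /(_ (Ordinal lt_j)) := same (Ordinal lt_i); rewrite !mem_trav_edges => /eqP.
apply/forallP => y; rewrite !mem_trav_edges.
have := congr1 (fun t => (x : nat, y : nat) \in t) eq_key.
by rewrite /= !mem_filter mem_pairs !andbT => ->.
Qed.

End Tours.

Implicit Types (M : mixed_graph 4) (s : {perm 'I_4}).

(* A mixed graph on 'I_4 is coded by the 4 x 4 table of digits: 0 for a non-edge,
   1 for an undirected edge, 2 for an arc x -> y and 3 for an arc y -> x. *)
Definition code_digit (c : seq (seq nat)) (x y : nat) : nat := nth 0%N (nth [::] c x) y.

Definition code_adj (c : seq (seq nat)) : rel nat := fun x y => code_digit c x y != 0%N.

Definition code_entry (c : seq (seq nat)) (x y : nat) : eis :=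
  match code_digit c x y with
  | 0 => 0 | 1 => 1 | 2 => eis_omega | _ => 1 - eis_omega
  end.

Definition pair_digit (M : mixed_graph 4) (x y : 'I_4) : nat :=
  (if marc M x y then 2 else if marc M y x then 3 else if madj M x y then 1 else 0)%N.

Definition code_of (M : mixed_graph 4) : seq (seq nat) :=
  [seq [seq pair_digit M (inord x) (inord y) | y <- iota 0 4] | x <- iota 0 4].

Lemma code_digit_of M (x y : 'I_4) : code_digit (code_of M) x y = pair_digit M x y.
Proof.
rewrite /code_digit (nth_map 0%N) ?size_iota // (nth_map 0%N) ?size_iota //.
by rewrite !nth_iota // !add0n !inord_val.
Qed.

Lemma madj_code M (x y : 'I_4) : madj M x y = code_adj (code_of M) x y.
Proof.
rewrite /code_adj code_digit_of /pair_digit; case: ifP => [/marc_adj -> // | _].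
case: ifP => [/marc_adj | _]; first by rewrite madj_sym => ->.
by case: (madj M x y).
Qed.

Lemma Nmx_code M :
  Nmx M = map_mx eisC (\matrix_(i < 4, j < 4) code_entry (code_of M) i j).
Proof.
apply/matrixP => x y; rewrite !mxE /code_entry code_digit_of /pair_digit.
case: (marc M x y); first by rewrite eisC_omega.
case: (marc M y x); first by rewrite eisC_omega_conj.
by case: (madj M x y); rewrite ?rmorph1 ?rmorph0.
Qed.

Fixpoint digit_seqs (k : nat) : seq (seq nat) :=
  if k is k'.+1 then [seq d :: c | d <- iota 0 4, c <- digit_seqs k'] else [:: [::]].

Lemma mem_digit_seqs c : all (fun d => d < 4)%N c -> c \in digit_seqs (size c).
Proof.
elim: c => [// | d c IH] /andP [lt_d lt_c].
by apply: (allpairs_f (fun d c => d :: c)); [rewrite mem_iota | exact: IH].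
Qed.

Definition code_pairs : seq (nat * nat) :=
  [:: (0, 1); (0, 2); (0, 3); (1, 2); (1, 3); (2, 3)]%N.

Definition swap_arc (d : nat) : nat := (if d == 2 then 3 else if d == 3 then 2 else d)%N.

Definition pair_code (ds : seq nat) (x y : nat) : nat :=
  if (x < y)%N then nth 0%N ds (index (x, y) code_pairs)
  else if (y < x)%N then swap_arc (nth 0%N ds (index (y, x) code_pairs)) else 0%N.

(* The 4^6 tables given by a digit for each pair of [code_pairs]. *)
Definition codes : seq (seq (seq nat)) :=
  [seq [seq [seq pair_code ds x y | y <- iota 0 4] | x <- iota 0 4] | ds <- digit_seqs 6].

Lemma pair_digitC M (x y : 'I_4) : pair_digit M x y = swap_arc (pair_digit M y x).
Proof.
rewrite /pair_digit; case xy: (marc M x y); first by rewrite (negPf (marc_asym xy)).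
by case: (marc M y x) => //; rewrite madj_sym; case: (madj M y x).
Qed.

Lemma mem_codes M : code_of M \in codes.
Proof.
pose ds := [seq pair_digit M (inord p.1) (inord p.2) | p <- code_pairs].
have ds_lt x y : (x < y < 4)%N ->
    nth 0%N ds (index (x, y) code_pairs) = pair_digit M (inord x) (inord y).
  move=> /andP [lt_xy lt_y]; have mem_xy : (x, y) \in code_pairs.
    by case: x y lt_xy lt_y => [|[|[|[|?]]]] [|[|[|[|?]]]].
  by rewrite (nth_map (0, 0)%N) ?index_mem // nth_index.
apply/mapP; exists ds.
  apply: mem_digit_seqs; apply/allP => _ /mapP [p _ ->].
  by rewrite /pair_digit; do 3 case: ifP => _ //.
apply/eq_in_map => x; rewrite mem_iota add0n => /andP [_ lt_x].
apply/eq_in_map => y; rewrite mem_iota add0n => /andP [_ lt_y].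
rewrite /pair_code; case: ltngtP => [lt_xy | lt_yx | eq_xy].
- by rewrite ds_lt // lt_xy lt_y.
- by rewrite ds_lt ?lt_yx ?lt_x // -pair_digitC.
- have /negPf marc_xx : ~~ marc M (inord x) (inord x).
    by apply/negP => /marc_adj; rewrite madj_irr.
  by rewrite -eq_xy /pair_digit marc_xx madj_irr.
Qed.

Definition code_minor (c : seq (seq nat)) (i j : nat) : eis :=
  cofdet 3 (fun a b => code_entry c (bump i a) (bump j b)).

Definition code_rank3 (c : seq (seq nat)) : bool :=
  (cofdet 4 (code_entry c) == 0) &&
  has (fun i => has (fun j => code_minor c i j != 0) (iota 0 4)) (iota 0 4).

Lemma rank3_code M : (\rank (Nmx M) == 3%N) = code_rank3 (code_of M).
Proof.
set c := code_of M; set E := \matrix_(i < 4, j < 4) code_entry c i j.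
have minorE (i j : 'I_4) :
    \det (mxsub (lift i) (lift j) (map_mx eisC E)) = eisC (code_minor c i j).
  rewrite -map_mxsub det_map_mx /code_minor -det_cofdet; congr (eisC (\det _)).
  by apply/matrixP => a b; rewrite !mxE.
rewrite Nmx_code mxrank_eq_corank1 det_map_mx det_cofdet (raddf_eq0 _ eisC_inj).
congr andb; rewrite -exists_ord_has; apply: eq_existsb => i.
by rewrite -exists_ord_has; apply: eq_existsb => j; rewrite minorE (raddf_eq0 _ eisC_inj).
Qed.

Definition code_closed (c : seq (seq nat)) (S : pred nat) : bool :=
  all (fun x => all (fun y => code_adj c x y ==> (S x == S y)) (iota 0 4)) (iota 0 4).

(* The proper nonempty subsets of 'I_4 are the bit patterns of 1, ..., 14. *)
Definition bit_set (k : nat) : pred nat := fun x => odd (k %/ 2 ^ x).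

Definition code_connected (c : seq (seq nat)) : bool :=
  all (fun k => ~~ code_closed c (bit_set k)) (iota 1 14).

Lemma mconnected_code M : mconnected M -> code_connected (code_of M).
Proof.
move=> conn; apply/allP => k k_proper; apply/negP => closed_k.
have proper : all (fun k => has (bit_set k) (iota 0 4) && ~~ all (bit_set k) (iota 0 4))
                  (iota 1 14) by [].
have /andP [/hasP [i i_lt ki] /allPn [j j_lt kj]] := allP proper k k_proper.
move: i_lt j_lt; rewrite !mem_iota !add0n => /andP [_ i_lt] /andP [_ j_lt].
have closedM : closed (madj M) [pred x : 'I_4 | bit_set k x].
  move=> x y; rewrite madj_code => adj_xy; apply/eqP.
  have x_lt : (x : nat) \in iota 0 4 by rewrite mem_iota ltn_ord.
  have y_lt : (y : nat) \in iota 0 4 by rewrite mem_iota ltn_ord.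
  by have /implyP := allP (allP closed_k x x_lt) y y_lt; apply.
have := closed_connect closedM (conn (Ordinal i_lt) (Ordinal j_lt)).
by rewrite !inE /= ki (negPf kj).
Qed.

Definition tour_ok (c : seq (seq nat)) (l : seq nat) : bool :=
  all (fun st => code_adj c st.1 st.2) (tour_steps 4 l).

Definition tour_weight (c : seq (seq nat)) (l : seq nat) : eis :=
  foldr *%R 1 [seq code_entry c st.1 st.2 | st <- tour_steps 4 l].

Definition tour_keys (c : seq (seq nat)) (P : pred eis) : seq (seq (nat * nat)) :=
  undup [seq tour_key 4 l | l <- permutations (iota 0 4) & tour_ok c l && P (tour_weight c l)].

Lemma is_trav_code M s : is_trav M s = tour_ok (code_of M) (perm_seq s).
Proof.
rewrite /tour_ok -forall_tour_steps; apply: eq_forallb => k; exact: madj_code.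
Qed.

Lemma trav_weight_code M s :
  trav_weight M s = eisC (tour_weight (code_of M) (perm_seq s)).
Proof.
rewrite /tour_weight -prod_tour_steps rmorph_prod; apply: eq_bigr => k _.
by rewrite Nmx_code !mxE.
Qed.

Section WeightedCycles.
Variables (M : mixed_graph 4) (W : pred algC) (P : pred eis).
Hypothesis WP : forall z, W (eisC z) = P z.

Lemma weighted_cycle_code s :
  [exists s', [&& is_trav M s', trav_edges s' == trav_edges s & W (trav_weight M s')]] =
  (tour_key 4 (perm_seq s) \in tour_keys (code_of M) P).
Proof.
have edges_eqE := @trav_edges_eqE 4 isT.
rewrite mem_undup; apply/existsP/mapP => [[s' /and3P [tr eq_e w]] | [l]].
  exists (perm_seq s'); last by apply/eqP; rewrite eq_sym -edges_eqE.
  by rewrite mem_filter perm_seq_mem -is_trav_code tr -WP -trav_weight_code w.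
rewrite mem_filter -codom_perm_seq => /andP [/andP [tr w] /codomP [s' eq_l]] eq_key; subst l.
exists s'.
by rewrite is_trav_code tr edges_eqE eq_key eqxx trav_weight_code WP.
Qed.

Lemma card_weighted_cycles :
  #|[set C | is_full_cycle M C &
       [exists s, [&& is_trav M s, trav_edges s == C & W (trav_weight M s)]]]| =
  size (tour_keys (code_of M) P).
Proof.
set S := [set s | is_trav M s && W (trav_weight M s)].
have -> : [set C | is_full_cycle M C &
             [exists s, [&& is_trav M s, trav_edges s == C & W (trav_weight M s)]]] =
          @trav_edges 4 @: S.
  apply/setP => C; rewrite !inE; apply/andP/imsetP.
    by case=> _ /existsP [s /and3P [tr /eqP <- w]]; exists s; rewrite // inE tr w.
  by case=> s; rewrite inE => /andP [tr w] ->; split; apply/existsP; exists s; rewrite tr eqxx.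
rewrite imset_card -(eq_card (mem_undup _)) (card_uniqP (undup_uniq _)).
rewrite (size_undup_map_ker (g := fun s => tour_key 4 (perm_seq s))); last first.
  by move=> s s'; exact: (@trav_edges_eqE 4 isT).
rewrite (map_comp (tour_key 4) (@perm_seq 4)); apply: size_undup_eq_mem => key.
apply: eq_mem_map => l; rewrite mem_filter; apply/mapP/andP => [[s] | [/andP [tr w]]].
  rewrite mem_enum inE is_trav_code trav_weight_code WP => /andP [tr w] ->.
  by rewrite perm_seq_mem tr w.
rewrite -codom_perm_seq => /codomP [s eq_l]; exists s; last exact: eq_l.
by rewrite mem_enum inE is_trav_code trav_weight_code WP -eq_l tr w.
Qed.

End WeightedCycles.

Definition k112n (x y : nat) : bool := (x != y) && ((x < 2) || (y < 2))%N.

Definition code_K112 (c : seq (seq nat)) : bool :=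
  has (fun l => all (fun x => all (fun y =>
         code_adj c (nth 0%N l x) (nth 0%N l y) == k112n x y) (iota 0 4)) (iota 0 4))
      (permutations (iota 0 4)).

Definition code_K4 (c : seq (seq nat)) : bool :=
  all (fun x => all (fun y => code_adj c x y == (x != y)) (iota 0 4)) (iota 0 4).

Lemma K112_code M : is_K112 M <-> code_K112 (code_of M).
Proof.
split => [[f K112f] | /has_perm_seqP [f /forall_ordP K112f]].
  apply/has_perm_seqP; exists f; apply/forall_ordP => x; apply/forall_ordP => y.
  by rewrite !nth_perm_seq -madj_code K112f.
exists f => x y; have /forall_ordP /(_ y) := K112f x.
by rewrite !nth_perm_seq -madj_code => /eqP.
Qed.

Lemma K4_code M : is_K4 M <-> code_K4 (code_of M).
Proof.
split => [K4 | /forall_ordP K4 x y].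
  by apply/forall_ordP => x; apply/forall_ordP => y; rewrite -madj_code K4.
by have /forall_ordP /(_ y) /eqP := K4 x; rewrite -madj_code.
Qed.

Definition seminegative_eis (z : eis) : bool :=
  (z == - eis_omega) || (z == - (1 - eis_omega)).

Lemma eisC_eq1 z : (eisC z == 1) = (z == 1).
Proof. exact: rmorph_eq1 eisC_inj. Qed.

Lemma eisC_seminegative z :
  ((eisC z == - omega) || (eisC z == - omega^*)) = seminegative_eis z.
Proof.
by rewrite -eisC_omega_conj -eisC_omega -!raddfN !(inj_eq eisC_inj).
Qed.

(* The [let] makes [vm_compute] compute the positive keys once, not once per ordering. *)
Definition code_all_positive (c : seq (seq nat)) : bool :=
  let positive_keys := tour_keys c (pred1 1) in
  all (fun l => tour_ok c l ==> (tour_key 4 l \in positive_keys)) (permutations (iota 0 4)).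

Lemma all_positive_code M :
  (forall C, is_full_cycle M C -> positive_cycle M C) <-> code_all_positive (code_of M).
Proof.
have keyE := @weighted_cycle_code M (fun w => w == 1) (pred1 1) eisC_eq1.
split => [allpos | /all_perm_seqP allpos C /existsP [s /andP [tr /eqP <-]]].
  apply/all_perm_seqP => s; apply/implyP; rewrite -is_trav_code -keyE => tr.
  by apply: allpos; apply/existsP; exists s; rewrite tr eqxx.
by rewrite /positive_cycle keyE; have /implyP := allpos s; apply; rewrite -is_trav_code.
Qed.

Definition code_rhs (c : seq (seq nat)) : bool :=
  (code_K112 c && code_all_positive c)
  || [&& code_K4 c, size (tour_keys c (pred1 1)) == 2%N
       & size (tour_keys c seminegative_eis) == 1%N].

Lemma rhs_code M :
  (is_K112 M /\ (forall C, is_full_cycle M C -> positive_cycle M C)) \/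
  (is_K4 M /\
     #|[set C | is_full_cycle M C & positive_cycle M C]| = 2%N /\
     #|[set C | is_full_cycle M C & seminegative_cycle M C]| = 1%N)
  <-> code_rhs (code_of M).
Proof.
rewrite K112_code K4_code all_positive_code.
rewrite (@card_weighted_cycles M (fun w => w == 1) (pred1 1) eisC_eq1).
rewrite (@card_weighted_cycles M (fun w => (w == - omega) || (w == - omega^*))
  seminegative_eis eisC_seminegative).
rewrite /code_rhs; split.
  case=> [[K112 allpos] | [K4 [pos neg]]]; apply/orP; [left | right].
    by rewrite K112 allpos.
  by apply/and3P; split; [exact: K4 | apply/eqP; exact: pos | apply/eqP; exact: neg].
case/orP => [/andP [K112 allpos] | /and3P [K4 /eqP pos /eqP neg]].
  exact: (or_introl (conj K112 allpos)).
exact: (or_intror (conj K4 (conj pos neg))).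
Qed.

Lemma codes_rank3_rhs :
  all (fun c => code_connected c ==> (code_rank3 c == code_rhs c)) codes.
Proof. by vm_compute. Qed.

Theorem lemma5p13 (M : mixed_graph 4) :
  mconnected M ->
  (\rank (Nmx M) = 3%N <->
   (is_K112 M /\ (forall C, is_full_cycle M C -> positive_cycle M C)) \/
   (is_K4 M /\
      #|[set C | is_full_cycle M C & positive_cycle M C]| = 2%N /\
      #|[set C | is_full_cycle M C & seminegative_cycle M C]| = 1%N)).
Proof.
move=> conn; rewrite rhs_code.
have /implyP /(_ (mconnected_code conn)) /eqP <- := allP codes_rank3_rhs _ (mem_codes M).
by rewrite -rank3_code; split => /eqP rk; exact: rk.
Qed.
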